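(* Let $G_1,\dots,G_n$ be rooted graphs and let $G$ be the decorated path obtained from them, with path vertices $1,\dots,n$. Assume that $\alpha_i^{G_i}=\alpha_{n+1-i}^{G_{n+1-i}}$ for all $i\in\{1,\dots,n\}$. Then $\alpha_1^G=\alpha_n^G$.
   Context: Graphs are finite and simple. For a graph $H$, $\phi^H$ is the characteristic polynomial of its adjacency matrix (variable $x$), and for a vertex $i$ of $H$, $\alpha_i^H=\phi^H/\phi^{H\setminus i}$ as a rational function. A rooted graph is a graph with a distinguished vertex (its root). The decorated path built from rooted graphs $G_1,\dots,G_n$ (pairwise disjoint) is obtained from the path on vertices $1,\dots,n$ (with $i\sim i+1$) by identifying the root of $G_i$ with vertex $i$. The root of $G_i$ is thus called $i$, and $\alpha_i^{G_i}$ is taken at that root. *)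

From HB Require Import structures.
From mathcomp Require Import all_boot all_order all_algebra.
From mathcomp Require Import fraction.
Set Implicit Arguments. Unset Strict Implicit. Unset Printing Implicit Defensive.
Import Order.TTheory GRing.Theory Num.Theory.
Local Open Scope ring_scope.

Definition simple_graph (V : finType) (e : rel V) : Prop :=
  symmetric e /\ irreflexive e.

(* adjacency matrix, vertices listed via enum (char. poly is invariant
   under relabelling) *)
Definition adjmx (V : finType) (e : rel V) : 'M[rat]_#|V| :=
  \matrix_(i, j) ((e (enum_val i) (enum_val j))%:R).

Definition phi (V : finType) (e : rel V) : {poly rat} := char_poly (adjmx e).

Definition delV (V : finType) (v : V) : finType := {x : V | x != v}.
Definition del_rel (V : finType) (e : rel V) (v : V) : rel (delV v) :=
  fun x y => e (val x) (val y).
Arguments del_rel {V} e v.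

Definition alpha (V : finType) (e : rel V) (v : V) : {fraction {poly rat}} :=
  FracField.tofrac (phi e) / FracField.tofrac (@phi (delV v) (del_rel e v)).

(* Decorated path built from rooted graphs (V i, e i, r i), i : 'I_m:
   disjoint union of the G_i plus edges r_i -- r_(i+1). *)
Definition dpath_rel (m : nat) (V : 'I_m -> finType) (e : forall i, rel (V i))
  (r : forall i, V i) : rel {i : 'I_m & V i} :=
  fun x y =>
    match x, y with
    | existT i a, existT j b =>
        (if i =P j is ReflectT E then
           e j (eq_rect i V a j E) b else false)
        || [&& a == r i, b == r j & ((i.+1 == j :> nat) || (j.+1 == i :> nat))]
    end.

From mathcomp Require Import all_boot all_algebra perm.
From mathcomp Require Import fraction zify ring.
Import GRing.Theory.
Local Open Scope ring_scope.

(* Every phi of an induced subgraph of G is a principal minor of the matrix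
   xI - A of G.  Splitting G at the bridge between the roots of G_k and
   G_(k+1) and expanding the determinant along these two root rows gives the
   three-term recurrence
     P_k = p_k P_(k+1) - q_k q_(k+1) P_(k+2)
   for the characteristic polynomial P_k of the decorated path on G_k, ..., G_n,
   where p_k = phi^(G_k) and q_k = phi^(G_k \ k).  Hence P_k / (q_k ... q_n) is
   the continuant K(alpha_k, ..., alpha_n) of the ratios alpha_k = p_k / q_k,
   and likewise for the segments G_1, ..., G_k.  Removing the root 1 (resp. n)
   of G leaves q_1 P_2 (resp. q_n times the polynomial of G_1, ..., G_(n-1)), so
   alpha_1^G = alpha_n^G reduces to K(alpha_2, ..., alpha_n) =
   K(alpha_1, ..., alpha_(n-1)).  The hypothesis makes the second sequence the
   reverse of the first, and continuants are invariant under reversal. *)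

Lemma det_row_col_perm {R : comNzRingType} {n} (s : 'S_n) (M : 'M[R]_n) :
  \det (row_perm s (col_perm s M)) = \det M.
Proof.
rewrite row_permE col_permE !det_mulmx !det_perm odd_permV.
by rewrite mulrCA mulrA -mulrA -signr_addb addbb mulr1.
Qed.

Section PrincipalMinor.
Variables (R : comNzRingType) (T : finType).
Implicit Types (N : T -> T -> R) (S A B P : {set T}).

Definition pminor N S : R :=
  \det (\matrix_(i, j) N (@enum_val T (mem S) i) (@enum_val T (mem S) j)).

Lemma pminor_codom {k} (f : 'I_k -> T) N S :
  injective f -> S =i codom f -> \det (\matrix_(i, j) N (f i) (f j)) = pminor N S.
Proof.
move=> f_inj Sf; have k_eq : k = #|S| by rewrite (eq_card Sf) card_codom ?card_ord.
subst k; have fS i : f i \in S by rewrite Sf codom_f.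
pose s i := enum_rank_in (fS i) (f i).
have sE i : enum_val (s i) = f i by rewrite enum_rankK_in.
have s_inj : injective s.
  by move=> i j /(congr1 (@enum_val T (mem S))); rewrite !sE => /f_inj.
rewrite /pminor -[RHS](det_row_col_perm (perm s_inj)); congr (\det _).
by apply/matrixP => i j; rewrite !mxE !permE !sE.
Qed.

Lemma eq_pminor N N' S : {in S &, N =2 N'} -> pminor N S = pminor N' S.
Proof.
by move=> eqN; congr (\det _); apply/matrixP => i j; rewrite !mxE eqN ?enum_valP.
Qed.

Lemma pminor0 N : pminor N set0 = 1.
Proof.
have f : 'I_0 -> T by case.
rewrite -(@pminor_codom 0 f) ?det_mx00 // => [[] // | t].
by rewrite in_set0; apply/esym/codomP => -[[]].
Qed.

Lemma pminorU N A B : [disjoint A & B] -> {in A & B, forall a b, N a b = 0} ->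
  pminor N (A :|: B) = pminor N A * pminor N B.
Proof.
move=> dAB NAB.
pose f i := match split i with
  | inl j => @enum_val T (mem A) j | inr j => @enum_val T (mem B) j end.
have f_inj : injective f.
  move=> i j; rewrite -(splitK i) -(splitK j) /f !unsplitK.
  case: (split i) => i'; case: (split j) => j' E.
  - by rewrite (enum_val_inj E).
  - by have := disjointFr dAB (enum_valP i'); rewrite E enum_valP.
  - by have := disjointFr dAB (enum_valP j'); rewrite -E enum_valP.
  - by rewrite (enum_val_inj E).
have ABf : A :|: B =i codom f.
  move=> t; rewrite inE; apply/orP/codomP => [[tA|tB]|[i ->]].
  - exists (lshift #|B| (enum_rank_in tA t)).
    by rewrite /f (unsplitK (inl _)) enum_rankK_in.
  - exists (rshift #|A| (enum_rank_in tB t)).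
    by rewrite /f (unsplitK (inr _)) enum_rankK_in.
  - by rewrite /f; case: (split i) => j; rewrite enum_valP; [left | right].
rewrite -(pminor_codom _ N _ f_inj ABf) /pminor.
rewrite -(det_lblock _ (\matrix_(i, j) N (@enum_val T (mem B) i) (@enum_val T (mem A) j))).
congr (\det _); apply/matrixP => i j; rewrite -(splitK i) -(splitK j) mxE /f !unsplitK.
case: (split i) => i'; case: (split j) => j';
  rewrite ?block_mxEul ?block_mxEur ?block_mxEdl ?block_mxEdr !mxE //.
by rewrite NAB ?enum_valP.
Qed.

Lemma pminor_row0 N S t0 : t0 \in S -> {in S, forall u, N t0 u = 0} -> pminor N S = 0.
Proof.
move=> t0S N0; rewrite /pminor (expand_det_row _ (enum_rank_in t0S t0)) big1 // => j _.
by rewrite mxE enum_rankK_in // N0 ?mul0r ?enum_valP.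
Qed.

Lemma pminor2 N a b : a != b -> N a a = 0 -> N b b = 0 ->
  pminor N [set a; b] = - (N a b * N b a).
Proof.
move=> ab Naa Nbb; pose f (i : 'I_2) := if i == ord0 then a else b.
have f_inj : injective f.
  move=> [[|[|?]] ?] [[|[|?]] ?] //=; rewrite /f /= => E; apply/val_inj => //=.
    by move: ab; rewrite E eqxx.
  by move: ab; rewrite E eqxx.
have abf : [set a; b] =i codom f.
  move=> t; rewrite !inE; apply/orP/codomP => [[]/eqP->|[[[|[|?]] ?] ->]] //.
  - by exists ord0.
  - by exists ord_max.
  - by left.
  - by right.
rewrite -(pminor_codom _ N _ f_inj abf) (expand_det_row _ ord0) !big_ord_recl big_ord0.
by rewrite /cofactor !det_mx11 !mxE /f /= Naa Nbb !mul0r add0r addr0 expr1 mulN1r mulrN.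
Qed.

Lemma pminor_pairU N S a b : a != b -> a \notin S -> b \notin S ->
  N a a = 0 -> N b b = 0 -> {in S, forall u, N a u = 0 /\ N b u = 0} ->
  pminor N ([set a; b] :|: S) = - (N a b * N b a) * pminor N S.
Proof.
move=> ab aS bS Naa Nbb NabS; rewrite pminorU ?pminor2 //.
  by apply/pred0P => t /=; rewrite !inE; case: orP => // -[]/eqP->; apply/negbTE.
by move=> t u; rewrite !inE => /orP[]/eqP-> /NabS[].
Qed.

Definition mask_row N t0 P : T -> T -> R :=
  fun t u => if (t == t0) && (u \notin P) then 0 else N t u.

Lemma pminor_mask_row N {S t0} P : t0 \in S ->
  pminor N S = pminor (mask_row N t0 P) S + pminor (mask_row N t0 (~: P)) S.
Proof.
move=> t0S; set i0 := enum_rank_in t0S t0.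
pose M N' := \matrix_(i, j) N' (@enum_val T (mem S) i) (@enum_val T (mem S) j).
have M_off Q : row' i0 (M (mask_row N t0 Q)) = row' i0 (M N).
  apply/matrixP => i j; rewrite !mxE /mask_row.
  case: eqP => [/(congr1 (enum_rank_in t0S))|//].
  by rewrite enum_valK_in => /eqP; rewrite eq_sym (negPf (neq_lift _ _)).
rewrite /pminor (determinant_multilinear (B := M (mask_row N t0 P))
  (C := M (mask_row N t0 (~: P))) (b := 1) (c := 1) (i0 := i0)) ?mul1r ?M_off //.
apply/rowP => j; rewrite !mxE !mul1r enum_rankK_in // /mask_row eqxx inE /=.
by case: (_ \in P); rewrite ?addr0 ?add0r.
Qed.

Section Bridge.
Variables (N : T -> T -> R) (A B : {set T}) (a0 b0 : T).
Hypotheses (dAB : [disjoint A & B]) (a0A : a0 \in A) (b0B : b0 \in B).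
Hypothesis NAB : {in A & B, forall a b, (a, b) != (a0, b0) -> N a b = 0}.
Hypothesis NBA : {in B & A, forall b a, (b, a) != (b0, a0) -> N b a = 0}.

Let notin_B a : a \in A -> a \in B = false. Proof. exact: disjointFr. Qed.
Let notin_A b : b \in B -> b \in A = false. Proof. exact: disjointFl. Qed.
Let neq_AB a b : a \in A -> b \in B -> (a == b) = false.
Proof. by move=> aA bB; apply: contraTF aA => /eqP->; rewrite notin_A. Qed.

Let N1 := mask_row N a0 (~: A).

Let pminor_row_A : pminor (mask_row N a0 A) (A :|: B) = pminor N A * pminor N B.
Proof.
rewrite pminorU // => [|a b aA bB]; last first.
  rewrite /mask_row notin_A //=; case: eqP => [//|/eqP aa0].
  by apply: NAB; rewrite // xpair_eqE (negPf aa0).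
congr (_ * _); apply: eq_pminor => t u tS uS; rewrite /mask_row.
  by rewrite uS andbF.
by rewrite eq_sym (neq_AB a0 t).
Qed.

(* Here the rows of B and the row of a0 all live on the columns of B. *)
Let pminor_rows_B : pminor (mask_row N1 b0 B) (A :|: B) = 0.
Proof.
rewrite setUC pminorU 1?disjoint_sym // => [|b a bB aA]; last first.
  rewrite /N1 /mask_row notin_B // [b == a0]eq_sym (neq_AB a0 b) //= andbT.
  case: eqP => [//|/eqP bb0].
  by apply: NBA; rewrite // xpair_eqE (negPf bb0).
rewrite (@pminor_row0 _ A a0) ?mulr0 // => u uA.
by rewrite /N1 /mask_row (neq_AB a0 b0) // eqxx !inE uA.
Qed.

Let pminor_rows_pair : pminor (mask_row N1 b0 (~: B)) (A :|: B) =
  - (N a0 b0 * N b0 a0) * (pminor N (A :\ a0) * pminor N (B :\ b0)).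
Proof.
have a0b0 : a0 != b0 by rewrite neq_AB.
have -> : A :|: B = [set a0; b0] :|: ((A :\ a0) :|: (B :\ b0)).
  apply/setP => t; rewrite !inE; case: (t =P a0) => [->|_]; first by rewrite a0A.
  by case: (t =P b0) => [->|_]; rewrite ?b0B ?orbT.
have maskE t u : mask_row N1 b0 (~: B) t u =
    if t == a0 then (if u \in A then 0 else N t u)
    else if t == b0 then (if u \in B then 0 else N t u) else N t u.
  rewrite /N1 /mask_row !inE !negbK; case: (t =P a0) => [->|_].
    by rewrite (negPf a0b0); case: (u \in A).
  by case: (t == b0); case: (u \in B).
rewrite pminor_pairU ?maskE ?eqxx ?(negPf a0b0) 1?eq_sym ?(negPf a0b0) ?a0A ?b0B
  ?(notin_A b0) ?(notin_B a0) //.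
- rewrite (eq_pminor _ N) => [|t u]; last first.
    rewrite !inE maskE => /orP[]/andP[/negPf-> tS] _; first by rewrite (neq_AB t b0).
    by rewrite eq_sym (neq_AB a0 t).
  rewrite pminorU //; first exact: disjointW (subD1set A a0) (subD1set B b0) dAB.
  move=> t u /setD1P[/negPf ta0 tA] /setD1P[_ uB].
  by apply: NAB; rewrite // xpair_eqE ta0.
- by rewrite !inE eqxx (notin_B _ a0A) andbF.
- by rewrite !inE eqxx (notin_A _ b0B) andbF.
move=> u; rewrite !inE !maskE eqxx [b0 == a0]eq_sym (negPf a0b0) eqxx.
case/orP=> /andP[un uS].
  rewrite uS (notin_B u) //; split=> //.
  by apply: NBA; rewrite // xpair_eqE eqxx (negPf un) andbF.
rewrite uS (notin_A u) //; split=> //.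
by apply: NAB; rewrite // xpair_eqE eqxx (negPf un).
Qed.

Lemma pminor_bridge : pminor N (A :|: B) = pminor N A * pminor N B
  - N a0 b0 * N b0 a0 * (pminor N (A :\ a0) * pminor N (B :\ b0)).
Proof.
have a0S : a0 \in A :|: B by rewrite inE a0A.
have b0S : b0 \in A :|: B by rewrite inE b0B orbT.
rewrite (pminor_mask_row N A a0S) -/N1 (pminor_mask_row N1 B b0S).
by rewrite pminor_row_A pminor_rows_B pminor_rows_pair add0r mulNr.
Qed.

End Bridge.

End PrincipalMinor.

Arguments pminor {R T}.

Lemma pminor_imset (R : comNzRingType) (T U : finType) (g : U -> T)
  (N : T -> T -> R) (S : {set U}) : injective g ->
  pminor (fun x y => N (g x) (g y)) S = pminor N (g @: S).
Proof.
move=> g_inj; rewrite {1}/pminor (@pminor_codom _ _ _ (g \o enum_val) N (g @: S)) //.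
  by move=> i j /g_inj/enum_val_inj.
move=> t; apply/imsetP/codomP => [[x xS ->]|[i ->]].
  by exists (enum_rank_in xS x); rewrite /= enum_rankK_in.
by exists (enum_val i); rewrite ?enum_valP.
Qed.

Section Continuant.
Variable R : comNzRingType.
Implicit Type s : seq R.

Fixpoint continuant s : R :=
  if s is x :: s1 then
    if s1 is y :: s2 then x * continuant s1 - continuant s2 else x
  else 1.

Lemma continuant_cons2 x y s :
  continuant [:: x, y & s] = x * continuant (y :: s) - continuant s.
Proof. by []. Qed.

Lemma continuant_rcons2 s x y :
  continuant (rcons (rcons s x) y) = y * continuant (rcons s x) - continuant s.
Proof.
have [m] := ubnP (size s); elim: m s => // m IH [|z [|w s]] lt_s.
- by rewrite /= mulrC.
- by rewrite /=; ring.
have lt_ws : (size (w :: s) < m)%N by [].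
rewrite !rcons_cons !continuant_cons2 -!rcons_cons !IH ?(ltnW lt_ws) //; ring.
Qed.

Lemma continuant_rev s : continuant (rev s) = continuant s.
Proof.
have [m] := ubnP (size s); elim: m s => // m IH [|x [|y s]] //= lt_s.
by rewrite !rev_cons continuant_rcons2 -rev_cons !IH //= ltnW.
Qed.

End Continuant.

Arguments continuant {R}.

Lemma index_iotaS lo hi : (lo < hi)%N -> index_iota lo hi = lo :: index_iota lo.+1 hi.
Proof. by move=> lt_lo_hi; rewrite /index_iota -subnSK. Qed.

Lemma map_index_iota_sym {X : Type} (f : nat -> X) n :
  (forall k, (k <= n)%N -> f k = f (n - k)%N) ->
  [seq f i | i <- index_iota 1 n.+1] = rev [seq f i | i <- index_iota 0 n].
Proof.
move=> f_sym; apply: (@eq_from_nth _ (f 0%N)) => [|i];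
  rewrite ?size_rev !size_map /index_iota subSS !subn0 ?size_iota // => lt_i.
rewrite nth_rev ?size_map ?size_iota // !(nth_map 0%N) ?size_iota ?nth_iota; try lia.
by rewrite f_sym ?add0n ?add1n //; lia.
Qed.

Definition char_entry {U : finType} (rl : rel U) (t u : U) : {poly rat} :=
  'X *+ (t == u) - ((rl t u)%:R : rat)%:P.

Lemma phi_pminor {U : finType} (rl : rel U) : phi rl = pminor (char_entry rl) setT.
Proof.
rewrite /phi /char_poly -(@pminor_codom _ _ _ (enum_val : 'I_#|U| -> U)); last 2 first.
- exact: enum_val_inj.
- by move=> t; rewrite inE; apply/esym/codomP; exists (enum_rank t); rewrite enum_rankK.
by congr (\det _); apply/matrixP => i j; rewrite !mxE /char_entry (inj_eq enum_val_inj).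
Qed.

Lemma phi_del_rel {U : finType} (rl : rel U) v :
  phi (del_rel rl v) = pminor (char_entry rl) [set~ v].
Proof.
rewrite phi_pminor (@eq_pminor _ _ _ (fun x y => char_entry rl (val x) (val y))) //.
rewrite pminor_imset; last exact: val_inj.
congr pminor; apply/setP => t; rewrite !inE; apply/imsetP/idP => [[x _ ->]|tv].
  exact: valP x.
by exists (Sub t tv : delV v).
Qed.

Lemma char_entry_neq {U : finType} (rl : rel U) t u :
  t != u -> char_entry rl t u = - ((rl t u)%:R : rat)%:P.
Proof. by move/negPf; rewrite /char_entry => ->; rewrite sub0r. Qed.

Section DecoratedPath.
Variables (n : nat) (V : 'I_n.+1 -> finType) (e : forall i, rel (V i))
  (r : forall i, V i).
Local Notation T := {i : 'I_n.+1 & V i}.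
Local Notation N := (char_entry (dpath_rel e r)).

Definition root i : T := existT V i (r i).

Lemma dpath_rel_tag_eq i x y : dpath_rel e r (existT V i x) (existT V i y) = e i x y.
Proof.
rewrite /dpath_rel; case: eqP => // E; rewrite (eq_irrelevance E erefl) /=.
by rewrite orbb (gtn_eqF (ltnSn i)) !andbF orbF.
Qed.

Lemma dpath_rel_tag_neq i j x y : i != j ->
  dpath_rel e r (existT V i x) (existT V j y) =
  [&& x == r i, y == r j & (i.+1 == j :> nat) || (j.+1 == i :> nat)].
Proof. by move=> ij; rewrite /dpath_rel; case: eqP => // E; rewrite E eqxx in ij. Qed.

Lemma char_entry_roots (i j : 'I_n.+1) : (i.+1 == j :> nat) || (j.+1 == i :> nat) ->
  N (root i) (root j) = -1.
Proof.
move=> ij; have neq_ij : i != j by apply: contraTneq ij => ->; rewrite !eqn_leq ltnn.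
rewrite char_entry_neq ?dpath_rel_tag_neq //= ?eqxx ?ij //.
by apply: contra neq_ij => /eqP/(congr1 tag) /= ->.
Qed.

Lemma char_entry_far i j x y : i != j ->
  ~~ [&& x == r i, y == r j & (i.+1 == j :> nat) || (j.+1 == i :> nat)] ->
  N (existT V i x) (existT V j y) = 0.
Proof.
move=> ij /negPf far; rewrite char_entry_neq ?dpath_rel_tag_neq ?far ?oppr0 //.
by apply: contra ij => /eqP/(congr1 tag) /= ->.
Qed.

Lemma pminor_tagged i (S : {set V i}) :
  pminor N (Tagged V @: S) = pminor (char_entry (e i)) S.
Proof.
rewrite -pminor_imset; last by move=> x y /eqP; rewrite eq_Tagged => /eqP.
apply: eq_pminor => x y _ _.
by rewrite /char_entry dpath_rel_tag_eq eq_Tagged.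
Qed.

(* Pieces are indexed by nat through [inord]; only indices [k <= n] are
   meaningful, larger ones silently denote piece 0. *)
Definition seg (lo hi : nat) : {set T} := [set t : T | lo <= tag t < hi]%N.
Definition phi_seg lo hi := pminor N (seg lo hi).
Definition phi_piece k := phi (e (inord k)).
Definition phi_piece_del k := phi (del_rel (e (inord k)) (r (inord k))).

Lemma phi_seg_nil k : phi_seg k k = 1.
Proof.
rewrite /phi_seg (_ : seg k k = set0) ?pminor0 //.
by apply/setP => t; rewrite !inE ltnNge andbN.
Qed.

Lemma seg_piece k : (k <= n)%N -> seg k k.+1 = Tagged V @: [set: V (inord k)].
Proof.
move=> kn; apply/setP => -[i x]; rewrite inE /= ltnS -eqn_leq.
apply/eqP/imsetP => [ki|[y _ /(congr1 tag) /= ->]]; last by rewrite inordK.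
have ik : i = inord k by apply: val_inj; rewrite /= inordK.
by subst i; exists x.
Qed.

Lemma phi_seg_piece k : (k <= n)%N -> phi_seg k k.+1 = phi_piece k.
Proof. by move=> kn; rewrite /phi_seg seg_piece // pminor_tagged -phi_pminor. Qed.

Lemma pminor_piece_del k : (k <= n)%N ->
  pminor N (seg k k.+1 :\ root (inord k)) = phi_piece_del k.
Proof.
move=> kn; rewrite /phi_piece_del phi_del_rel -pminor_tagged seg_piece //.
congr pminor; apply/setP => t; rewrite !inE.
apply/andP/imsetP => [[tr /imsetP[x _ tx]]|[x]].
  by exists x; rewrite // !inE; apply: contra tr; rewrite tx => /eqP->.
by rewrite !inE => xr ->; split; [rewrite eq_Tagged | apply: imset_f].
Qed.

Lemma pminor_seg_del lo k hi : (lo <= k < hi)%N -> (hi <= n.+1)%N ->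
  pminor N (seg lo hi :\ root (inord k)) =
  phi_seg lo k * phi_piece_del k * phi_seg k.+1 hi.
Proof.
move=> /andP[lok khi] hn; have kn : (k <= n)%N by lia.
set M := seg k k.+1 :\ root (inord k).
have M_nonroot i x : existT V i x \in M -> x != r i.
  rewrite !inE /= => /andP[xr ik].
  have ik' : i = inord k by apply: val_inj; rewrite /= inordK; lia.
  by subst i; apply: contra xr => /eqP->.
have -> : seg lo hi :\ root (inord k) = (seg lo k :|: M) :|: seg k.+1 hi.
  apply/setP => t; rewrite !inE.
  by case: (t =P root (inord k)) => [->|_] /=; rewrite ?inordK; lia.
rewrite pminorU; last 2 first.
- by apply/pred0P => t /=; rewrite !inE; lia.
- move=> [i x] [j y] aS; rewrite inE /= => /andP[kj jh].
  have ik : (i <= k)%N.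
    by case/setUP: aS; rewrite !inE /= => /andP[]; [move=> _ /ltnW | move=> _ /andP[_]].
  apply: char_entry_far; first by apply: contraTneq kj => <-; rewrite -leqNgt.
  case/setUP: aS => [|/M_nonroot/negPf->//]; rewrite inE /= => /andP[li {}ik].
  by apply/and3P => -[_ _]; lia.
rewrite pminorU; last 2 first.
- by apply/pred0P => t /=; rewrite !inE; lia.
- move=> [i x] [j y]; rewrite inE /= => /andP[li ik] bM; apply: char_entry_far.
    have jk : j = k :> nat by move: bM; rewrite !inE /= => /andP[_]; lia.
    by apply: contraTneq ik => ->; rewrite jk ltnn.
  by rewrite (negPf (M_nonroot _ _ bM)) andbF.
by rewrite pminor_piece_del.
Qed.

Lemma char_entry_off_bridge lo (i j : 'I_n.+1) x y : i = lo :> nat -> (lo < j)%N ->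
  (existT V i x, existT V j y) != (root (inord lo), root (inord lo.+1)) ->
  N (existT V i x) (existT V j y) = 0 /\ N (existT V j y) (existT V i x) = 0.
Proof.
move=> ilo loj not_bridge.
have ij : i != j by apply: contraTneq loj => <-; rewrite ilo ltnn.
suff far : ~~ [&& x == r i, y == r j & (i.+1 == j :> nat) || (j.+1 == i :> nat)].
  split; apply: char_entry_far => //; first by rewrite eq_sym.
  by rewrite andbCA orbC.
apply: contra not_bridge => /and3P[/eqP-> /eqP-> adj].
have := ltn_ord i; have := ltn_ord j => j_n i_n.
have -> : i = inord lo by apply: val_inj; rewrite /= inordK; lia.
by have -> : j = inord lo.+1 by apply: val_inj; rewrite /= inordK; lia.
Qed.

Lemma phi_seg_cons lo hi : (lo.+1 < hi <= n.+1)%N ->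
  phi_seg lo hi = phi_piece lo * phi_seg lo.+1 hi
                  - phi_piece_del lo * phi_piece_del lo.+1 * phi_seg lo.+2 hi.
Proof.
move=> /andP[lo1_hi hn]; have lo1_n : (lo.+1 <= n)%N by lia.
rewrite /phi_seg (_ : seg lo hi = seg lo lo.+1 :|: seg lo.+1 hi); last first.
  by apply/setP => t; rewrite !inE; lia.
rewrite (@pminor_bridge _ _ _ _ _ (root (inord lo)) (root (inord lo.+1))).
- have adj : (inord lo : 'I_n.+1).+1 == (inord lo.+1 : 'I_n.+1) :> nat.
    by rewrite !inordK // ltnS ltnW.
  rewrite !char_entry_roots ?adj ?orbT // mulrNN mul1r.
  rewrite -/(phi_seg lo lo.+1) -/(phi_seg lo.+1 hi) phi_seg_piece ?(ltnW lo1_n) //.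
  rewrite pminor_piece_del ?(ltnW lo1_n) // pminor_seg_del ?leqnn //.
  by rewrite phi_seg_nil !mul1r mulrA.
- by apply/pred0P => t /=; rewrite !inE; lia.
- by rewrite inE /= inordK; lia.
- by rewrite inE /= inordK; lia.
- move=> [i x] [j y]; rewrite !inE /= => /andP[li il] /andP[lj jh] not_bridge.
  by case: (char_entry_off_bridge lo i j x y) => //; lia.
- move=> [j y] [i x]; rewrite !inE /= => /andP[lj jh] /andP[li il] not_bridge.
  case: (char_entry_off_bridge lo i j x y) => //; first lia.
  by rewrite xpair_eqE andbC -xpair_eqE.
Qed.

Lemma pminor_del_root (i : 'I_n.+1) :
  pminor N [set~ root i] = phi_seg 0 i * phi_piece_del i * phi_seg i.+1 n.+1.
Proof.
rewrite -pminor_seg_del ?ltn_ord // inord_val; congr pminor.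
by apply/setP => t; rewrite !inE leq0n (ltn_ord (tag t)) !andbT.
Qed.

Local Notation "p %:F" := (FracField.tofrac p).

Definition alpha_piece k := alpha (e (inord k)) (r (inord k)).

Lemma tofrac_phi_seg lo hi : (lo <= hi <= n.+1)%N ->
  (phi_seg lo hi)%:F = (\prod_(lo <= i < hi) (phi_piece_del i)%:F)
                       * continuant [seq alpha_piece i | i <- index_iota lo hi].
Proof.
have [m] := ubnP (hi - lo); elim: m lo => // m IH lo lt_m /andP[lo_hi hin].
have q_neq0 k : (phi_piece_del k)%:F != 0.
  by rewrite tofrac_eq0 monic_neq0 // char_poly_monic.
have p_alpha k : (phi_piece k)%:F = alpha_piece k * (phi_piece_del k)%:F.
  by rewrite /alpha_piece /alpha divfK ?q_neq0.
case: (ltngtP hi lo.+1) => [hi_le_lo | lo1_hi | hi_lo1].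
- have -> : hi = lo by lia.
  by rewrite phi_seg_nil big_geq // /index_iota subnn tofrac1 mul1r.
- rewrite phi_seg_cons ?lo1_hi // tofracB !tofracM !IH; try lia.
  rewrite (index_iotaS lo hi) 1?(index_iotaS lo.+1 hi) ?big_cons; try lia.
  by rewrite !map_cons continuant_cons2 p_alpha; ring.
- rewrite hi_lo1 phi_seg_piece; last by rewrite -ltnS -hi_lo1.
  by rewrite /index_iota subSnn big_seq1 /= p_alpha mulrC.
Qed.

End DecoratedPath.

Arguments alpha_piece {n V} e r k.

Theorem lemma6 (n : nat) (V : 'I_n.+1 -> finType) (e : forall i, rel (V i))
  (r : forall i, V i)
  (He : forall i, simple_graph (e i))
  (Hsym : forall i : 'I_n.+1,
     alpha (e i) (r i) = alpha (e (rev_ord i)) (r (rev_ord i))) :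
  alpha (dpath_rel e r) (existT V ord0 (r ord0))
  = alpha (dpath_rel e r) (existT V ord_max (r ord_max)).
Proof.
have alpha_sym k : (k <= n)%N -> alpha_piece e r k = alpha_piece e r (n - k)%N.
  move=> kn; rewrite /alpha_piece Hsym.
  suff -> : rev_ord (inord k) = inord (n - k)%N :> 'I_n.+1 by [].
  by apply: val_inj; rewrite /= !inordK; lia.
rewrite /alpha !(phi_del_rel (dpath_rel e r)) !pminor_del_root /=; congr (_ / _).
rewrite !phi_seg_nil mul1r mulr1 !tofracM !tofrac_phi_seg ?leqnn ?leqnSn //.
rewrite (map_index_iota_sym _ _ alpha_sym) continuant_rev.
by rewrite mulrA -big_ltn // mulrAC -big_nat_recr.
Qed.
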